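(* Let $A=(\Sigma,q,N,\delta)$ be a simple LQCA with $|N|=r\ge2$. Then the columns $U_A(\cdot,c)$, $c\in\mathcal C_A$, are pairwise orthogonal (i.e. $\langle U_A(\cdot,c),U_A(\cdot,c')\rangle=0$ for all $c\neq c'$) if and only if $p_1=p_2$ for every $q$-cycle $p$ of the graph $H_A$.
   Context: A linear quantum cellular automaton (LQCA) is a tuple $A=(\Sigma,q,N,\delta)$ where $\Sigma$ is a finite nonempty set of states, $N=(a_1,\dots,a_r)$ is a strictly increasing sequence of integers, $\delta:\Sigma^r\to\mathbb C^\Sigma$ satisfies $\|\delta(w)\|>0$ for all $w$, and $q\in\Sigma$ satisfies $[\delta(q,\dots,q)](x)=1$ if $x=q$ and $0$ otherwise. It is simple if $a_r-a_1=r-1$. On $\mathbb C^\Sigma$, $\langle u,v\rangle=\sum_x u(x)\overline{v(x)}$, and $u\perp v$ means $\langle u,v\rangle=0$. A configuration is a map $c:\mathbb Z\to\Sigma$ with $c_i\ne q$ for only finitely many $i$; $\mathcal C_A$ is the set of configurations. With $c_{i+N}=(c_{i+a_1},\dots,c_{i+a_r})$, $U_A(d,c)=\prod_{i\in\mathbb Z}[\delta(c_{i+N})](d_i)$; $U_A(\cdot,c)$ is the column $d\mapsto U_A(d,c)$ in $\ell_2(\mathcal C_A)$ with inner product $\langle u,v\rangle=\sum_d u(d)\overline{v(d)}$. The directed graph $H_A=(V,E)$ has $V=\Sigma^{r-1}\times\Sigma^{r-1}$ and $E=\{((x_1z_1,x_2z_2),(z_1y_1,z_2y_2)):x_1,x_2,y_1,y_2\in\Sigma,\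 z_1,z_2\in\Sigma^{r-2},\ \delta(x_1z_1y_1)\not\perp\delta(x_2z_2y_2)\}$. A path $p=((u_0,v_0),\dots,(u_k,v_k))$ in $H_A$ is a cycle if $k>0$ and $(u_0,v_0)=(u_k,v_k)$, and a $q$-cycle if moreover $(u_0,v_0)=(q^{r-1},q^{r-1})$; $p_1=(u_0,\dots,u_k)$ and $p_2=(v_0,\dots,v_k)$. *)

From HB Require Import structures.
From mathcomp Require Import all_boot all_order all_algebra.
From mathcomp Require Import boolp classical_sets functions cardinality fsbigop reals.
From mathcomp Require Import complex.
Set Implicit Arguments. Unset Strict Implicit. Unset Printing Implicit Defensive.
Import Order.TTheory GRing.Theory Num.Theory.
Local Open Scope ring_scope.
Local Open Scope classical_set_scope.

(* Complex numbers are modelled as R[i] for an arbitrary R : realType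
   (a complete archimedean ordered field, i.e. a model of the reals). *)

Definition dotv (R : realType) (S : finType) (u v : S -> R[i]) : R[i] :=
  \sum_(x : S) u x * (v x)^*.

(* A = (Sigma, q, N, delta) is an LQCA.  Words of Sigma^r are seqs of size r
   (r = size N); the values of delta on words of other lengths are never used. *)
Definition is_LQCA (R : realType) (S : finType) (q : S) (N : seq int)
    (delta : seq S -> S -> R[i]) : Prop :=
  [/\ N != [::],
      sorted <%R N,
      (forall w : seq S, size w = size N -> 0 < dotv (delta w) (delta w))
    & (forall x : S, delta (nseq (size N) q) x = (x == q)%:R)].

Definition is_simple (N : seq int) : Prop :=
  last 0 N - head 0 N = (size N)%:Z - 1.

Definition config (S : finType) (q : S) : set (int -> S) :=
  [set c | finite_set [set i | c i != q]].

Definition nbhd (S : finType) (N : seq int) (c : int -> S) (i : int) : seq S :=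
  map (fun a => c (i + a)) N.

Definition UA (R : realType) (S : finType) (N : seq int)
    (delta : seq S -> S -> R[i]) (d c : int -> S) : R[i] :=
  \big[*%R/1]_(i \in [set: int]) delta (nbhd N c i) (d i).

Definition col_inner (R : realType) (S : finType) (q : S) (N : seq int)
    (delta : seq S -> S -> R[i]) (c c' : int -> S) : R[i] :=
  \sum_(d \in config q) UA N delta d c * (UA N delta d c')^*.

Definition columns_orthogonal (R : realType) (S : finType) (q : S) (N : seq int)
    (delta : seq S -> S -> R[i]) : Prop :=
  forall c c' : int -> S, config q c -> config q c' -> c <> c' ->
    col_inner q N delta c c' = 0.

Definition H_edge (R : realType) (S : finType) (r : nat)
    (delta : seq S -> S -> R[i]) (u v : seq S * seq S) : Prop :=
  exists (x1 x2 y1 y2 : S) (z1 z2 : seq S),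
    [/\ size z1 = (r - 2)%N, size z2 = (r - 2)%N,
        u = (x1 :: z1, x2 :: z2), v = (rcons z1 y1, rcons z2 y2)
      & dotv (delta (x1 :: rcons z1 y1)) (delta (x2 :: rcons z2 y2)) != 0].

Definition q_vertex (S : finType) (r : nat) (q : S) : seq S * seq S :=
  (nseq (r - 1) q, nseq (r - 1) q).

Definition q_cycle (R : realType) (S : finType) (r : nat) (q : S)
    (delta : seq S -> S -> R[i]) (p : seq (seq S * seq S)) : Prop :=
  [/\ (1 < size p)%N,
      (forall i : nat, (i.+1 < size p)%N ->
         H_edge r delta (nth (q_vertex r q) p i) (nth (q_vertex r q) p i.+1)),
      nth (q_vertex r q) p 0 = q_vertex r q
    & nth (q_vertex r q) p (size p).-1 = q_vertex r q].

From HB Require Import structures.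
From mathcomp Require Import all_boot all_order all_algebra.
From mathcomp Require Import boolp classical_sets functions cardinality fsbigop reals.
From mathcomp Require Import complex.
From mathcomp Require Import zify.
From mathcomp Require Import finmap.

(* Since N = a_1 + {0, ..., r-1}, the factor of U_A(d, c) at site i is delta
   applied to the length-r window of c starting at i + a_1.  When c and c' are
   quiescent outside a segment, the sum over d of products over sites is the
   product over sites of sums, so <U_A(., c), U_A(., c')> is the product over
   window positions t of <delta(c_t ... c_{t+r-1}), delta(c'_t ... c'_{t+r-1})>,
   the factors at all-q windows being 1.  This is non-zero iff consecutive
   pairs of (r-1)-windows of (c, c') are edges of H_A, i.e. iff the sequence
   of window pairs of (c, c'), read from left of both supports to right of
   them, is a q-cycle.  Conversely every q-cycle is the window sequence of the
   two configurations spelled by the first letters of its two sides, and these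
   are equal iff the two sides are. *)

Set Implicit Arguments. Unset Strict Implicit. Unset Printing Implicit Defensive.
Import Order.TTheory GRing.Theory Num.Theory.
Local Open Scope ring_scope.
Local Open Scope classical_set_scope.

Definition in_segment (lo : int) (n : nat) (i : int) : bool := lo <= i < lo + n%:Z.

Definition segment_fset (lo : int) (n : nat) : {fset int} :=
  [fset (lo + (nat_of_ord j)%:Z)%R | j in 'I_n]%fset.

Lemma in_segment_fset lo n i : (i \in segment_fset lo n) = in_segment lo n i.
Proof.
rewrite /in_segment; apply/imfsetP/idP => [[j _ ->]|/andP[h1 h2]].
  by have := ltn_ord j; lia.
have hn : (absz (i - lo) < n)%N by lia.
by exists (Ordinal hn) => //=; lia.
Qed.

Lemma config_bounded (S : finType) (q : S) (c : int -> S) :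
  config q c -> exists M : nat, forall t, (M < `|t|)%N -> c t = q.
Proof.
move=> /finite_fsetP [X supp]; exists (\max_(i <- X) `|i|)%N => t ltMt.
apply/eqP/negPn/negP => ctq.
have tX : t \in X by have : [set` X] t by rewrite -supp.
have := @leq_bigmax_seq _ (X : seq int) xpredT (fun i : int => `|i|%N) t tX isT.
by rewrite leqNgt ltMt.
Qed.

Definition window (T : Type) (c : int -> T) (t : int) (m : nat) : seq T :=
  [seq c (t + k%:Z) | k <- iota 0 m].

Lemma size_window T (c : int -> T) t m : size (window c t m) = m.
Proof. by rewrite size_map size_iota. Qed.

Lemma nth_window T (x0 : T) (c : int -> T) t m k : (k < m)%N ->
  nth x0 (window c t m) k = c (t + k%:Z).
Proof. by move=> hk; rewrite (nth_map 0%N) ?size_iota // nth_iota. Qed.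

Lemma window_nseq (T : eqType) (q : T) (c : int -> T) t m :
  (forall k, (k < m)%N -> c (t + k%:Z) = q) -> window c t m = nseq m q.
Proof.
move=> cq; apply: (@eq_from_nth _ q); first by rewrite size_window size_nseq.
by move=> k; rewrite size_window => hk; rewrite nth_window // nth_nseq hk cq.
Qed.

Lemma window_cons T (c : int -> T) t m : window c t m.+1 = c t :: window c (t + 1) m.
Proof.
rewrite /window /= addr0 -[in LHS](addn0 1%N) iotaDl -map_comp.
by congr (_ :: _); apply: eq_map => k /=; congr c; lia.
Qed.

Lemma window_rcons T (c : int -> T) t m :
  window c t m.+1 = rcons (window c t m) (c (t + m%:Z)).
Proof. by rewrite /window -addn1 iotaD map_cat cats1 add0n. Qed.

Section ColumnProduct.
Variables (R : realType) (S : finType) (q : S) (N : seq int) (delta : seq S -> S -> R[i]).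
Hypothesis delta_q : forall x, delta (nseq (size N) q) x = (x == q)%:R.
Variables (lo : int) (n : nat).

Definition quiescent_off_segment (c : int -> S) : Prop :=
  forall i, ~~ in_segment lo n i -> nbhd N c i = nseq (size N) q.

Lemma UA_segment c d : quiescent_off_segment c ->
  (forall i, ~~ in_segment lo n i -> d i = q) ->
  UA N delta d c = \prod_(j < n) delta (nbhd N c (lo + j%:Z)) (d (lo + j%:Z)).
Proof.
rewrite /UA => cq dq.
rewrite (fsbigTE (segment_fset lo n)); last first.
  by move=> i; rewrite in_segment_fset => hi; rewrite cq // delta_q dq // eqxx.
rewrite big_imfset /=; last by move=> j k _ _ /= h; apply/val_inj => /=; lia.
by rewrite big_enum.
Qed.

Lemma UA_eq0 c d : quiescent_off_segment c -> config q d ->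
  (exists i, ~~ in_segment lo n i /\ d i != q) -> UA N delta d c = 0.
Proof.
rewrite /UA /config /= => cq fd [i0 [hi0 di0]].
have fin : finite_set ([set` segment_fset lo n] `|` [set i | d i != q]).
  by rewrite finite_setU; split => //; apply: finite_fset.
rewrite (fsbigTE (fset_set ([set` segment_fset lo n] `|` [set i | d i != q]))); last first.
  move=> i; rewrite in_fset_set // notin_setE /= => /not_orP [h1 /negP].
  rewrite negbK => /eqP ->; rewrite cq ?delta_q ?eqxx //.
  by rewrite -in_segment_fset; apply/negP.
rewrite (big_rem i0) /=; last by rewrite in_fset_set //; apply/mem_set; right.
by rewrite (cq _ hi0) delta_q (negbTE di0) mul0r.
Qed.

Definition segment_ext (f : {ffun 'I_n -> S}) (i : int) : S :=
  if lo <= i then oapp (fun j : 'I_n => f j) q (insub (absz (i - lo))) else q.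

Lemma segment_ext_in f (j : 'I_n) : segment_ext f (lo + j%:Z) = f j.
Proof.
rewrite /segment_ext lerDl lez_nat /=.
have -> : absz (lo + j%:Z - lo)%R = j by lia.
by rewrite valK.
Qed.

Lemma segment_ext_out f i : ~~ in_segment lo n i -> segment_ext f i = q.
Proof.
rewrite /segment_ext /in_segment => hi; case: ifP => // hl.
by rewrite insubN //; lia.
Qed.

Lemma segment_ext_inj : injective segment_ext.
Proof. by move=> f g h; apply/ffunP => j; rewrite -!segment_ext_in h. Qed.

Lemma segment_ext_config f : config q (segment_ext f).
Proof.
apply: (sub_finite_set _ (finite_fset (segment_fset lo n))) => i /= hi.
rewrite /= in_segment_fset; apply/negPn/negP => /(segment_ext_out f) h.
by rewrite h eqxx in hi.
Qed.

Lemma segment_ext_restrict d : (forall i, ~~ in_segment lo n i -> d i = q) ->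
  d = segment_ext [ffun j => d (lo + (nat_of_ord j)%:Z)].
Proof.
move=> dq; apply/funext => i; have [hi|hi] := boolP (in_segment lo n i).
  move: hi => /andP[h1 h2]; have hn : (absz (i - lo) < n)%N by lia.
  have -> : i = lo + (nat_of_ord (Ordinal hn))%:Z by rewrite /=; lia.
  by rewrite segment_ext_in ffunE.
by rewrite segment_ext_out // dq.
Qed.

(* Only configurations that agree with [q] off the segment contribute. *)
Lemma col_inner_segment c c' : quiescent_off_segment c ->
  col_inner q N delta c c' =
  \sum_(f : {ffun 'I_n -> S})
     UA N delta (segment_ext f) c * (UA N delta (segment_ext f) c')^*.
Proof.
move=> cq; rewrite /col_inner.
rewrite -(fsbig_widen (segment_ext @` setT) (config q)); last 2 first.
- by move=> _ [f _ <-]; apply: segment_ext_config.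
- move=> d [dc dni] /=.
  have [dq|] := pselect (forall i, ~~ in_segment lo n i -> d i = q).
    by case: dni; exists [ffun j => d (lo + (nat_of_ord j)%:Z)];
      rewrite // -segment_ext_restrict.
  move=> /existsNP [i /not_implyP [hi /eqP di]].
  by rewrite (UA_eq0 cq) ?mul0r //; exists i.
rewrite fsbig_image; last by move=> f g _ _; apply: segment_ext_inj.
rewrite (fsbigTE [fset f | f in {ffun 'I_n -> S}]%fset); last first.
  by move=> f; rewrite in_imfset.
by rewrite big_imfset //= big_enum.
Qed.

Lemma col_inner_prod c c' :
  quiescent_off_segment c -> quiescent_off_segment c' ->
  col_inner q N delta c c' =
  \prod_(j < n) dotv (delta (nbhd N c (lo + j%:Z))) (delta (nbhd N c' (lo + j%:Z))).
Proof.
move=> cq c'q; rewrite (col_inner_segment c' cq) bigA_distr_bigA /=.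
apply: eq_bigr => f _.
rewrite (UA_segment cq) ?(UA_segment c'q); try by move=> i; apply: segment_ext_out.
rewrite rmorph_prod -big_split /=.
by apply: eq_bigr => j _; rewrite !segment_ext_in.
Qed.

End ColumnProduct.

Lemma sorted_ltz_span (x : int) (s : seq int) :
  sorted <%R (x :: s) -> (size s)%:Z <= last x s - x.
Proof.
elim: s x => [|y s IH] x /=; first by rewrite subrr.
by move=> /andP[hxy hs]; have := IH y hs; lia.
Qed.

Lemma sorted_ltz_tight (x : int) (s : seq int) :
  sorted <%R (x :: s) -> last x s - x = (size s)%:Z ->
  x :: s = [seq x + k%:Z | k <- iota 0 (size s).+1].
Proof.
elim: s x => [|y s IH] x /=; first by rewrite addr0.
move=> /andP[hxy hs] hl; have span := sorted_ltz_span hs.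
have y1 : y = x + 1 by lia.
rewrite addr0 (IH y) //; last by lia.
rewrite [in RHS]/= (iotaDl 1 1) -map_comp y1 /= addr0; congr (_ :: _ :: _).
by rewrite (iotaDl 1 0) -!map_comp; apply: eq_map => k /=; lia.
Qed.

Lemma nbhd_simple (S : finType) (N : seq int) (c : int -> S) i :
  N != [::] -> sorted <%R N -> is_simple N ->
  nbhd N c i = window c (i + head 0 N) (size N).
Proof.
case: N => [//|a s] _ /sorted_ltz_tight tight span; rewrite /is_simple /= in span.
rewrite /nbhd {1}tight; last by lia.
by rewrite /window -map_comp; apply: eq_map => k /=; rewrite addrA.
Qed.

Definition side (T : Type) (b : bool) : T * T -> T := if b then fst else snd.

Section WindowsInH.
Variables (R : realType) (S : finType) (delta : seq S -> S -> R[i]) (m : nat).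

Lemma H_edge_size u v b : H_edge m.+2 delta u v -> size (side b u) = m.+1.
Proof.
case=> [x1 [x2 [y1 [y2 [z1 [z2 [hz1 hz2 -> _ _]]]]]]].
by case: b; rewrite /= ?hz1 ?hz2; lia.
Qed.

Lemma H_edge_shift u v b l x : H_edge m.+2 delta u v -> (l < m)%N ->
  nth x (side b u) l.+1 = nth x (side b v) l.
Proof.
case=> [x1 [x2 [y1 [y2 [z1 [z2 [hz1 hz2 -> -> _]]]]]]] lm.
by case: b; rewrite /= nth_rcons ?hz1 ?hz2 ifT //; lia.
Qed.

Lemma H_edge_window (c c' : int -> S) t :
  H_edge m.+2 delta (window c t m.+1, window c' t m.+1)
                    (window c (t + 1) m.+1, window c' (t + 1) m.+1) <->
  dotv (delta (window c t m.+2)) (delta (window c' t m.+2)) != 0.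
Proof.
have glue (d : int -> S) :
    rcons (window d (t + 1) m) (d (t + m.+1%:Z)) = window d (t + 1) m.+1.
  by rewrite window_rcons; congr (rcons _ (d _)); lia.
split.
- case=> [x1 [x2 [y1 [y2 [z1 [z2 [_ _ u v nz]]]]]]].
  move: u v => /pair_equal_spec[u1 u2] /pair_equal_spec[v1 v2].
  have join (d : int -> S) x z y : window d t m.+1 = x :: z ->
      window d (t + 1) m.+1 = rcons z y -> window d t m.+2 = x :: rcons z y.
    by rewrite window_cons => -[<- _] <-; rewrite window_cons.
  by rewrite (join c x1 z1 y1) // (join c' x2 z2 y2).
- move=> nz; exists (c t), (c' t), (c (t + m.+1%:Z)), (c' (t + m.+1%:Z)),
    (window c (t + 1) m), (window c' (t + 1) m).
  by rewrite !glue -!window_cons !size_window; split => //; lia.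
Qed.

Definition window_path (c c' : int -> S) (t0 : int) (k : nat) : seq (seq S * seq S) :=
  [seq (window c (t0 + j%:Z) m.+1, window c' (t0 + j%:Z) m.+1) | j <- iota 0 k.+1].

Lemma size_window_path c c' t0 k : size (window_path c c' t0 k) = k.+1.
Proof. by rewrite size_map size_iota. Qed.

Lemma nth_window_path x c c' t0 k j : (j <= k)%N ->
  nth x (window_path c c' t0 k) j = (window c (t0 + j%:Z) m.+1, window c' (t0 + j%:Z) m.+1).
Proof. by move=> jk; rewrite (nth_map 0%N) ?size_iota ?nth_iota. Qed.

Lemma H_edge_window_path x c c' t0 k j : (j < k)%N ->
  H_edge m.+2 delta (nth x (window_path c c' t0 k) j) (nth x (window_path c c' t0 k) j.+1) <->
  dotv (delta (window c (t0 + j%:Z) m.+2)) (delta (window c' (t0 + j%:Z) m.+2)) != 0.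
Proof.
move=> jk; rewrite !nth_window_path; try lia.
by rewrite (_ : t0 + j.+1%:Z = t0 + j%:Z + 1); [exact: H_edge_window | lia].
Qed.

Lemma window_path_q_cycle (q : S) c c' t0 k : (0 < k)%N ->
  (window c t0 m.+1, window c' t0 m.+1) = q_vertex m.+2 q ->
  (window c (t0 + k%:Z) m.+1, window c' (t0 + k%:Z) m.+1) = q_vertex m.+2 q ->
  (forall j, (j < k)%N ->
     dotv (delta (window c (t0 + j%:Z) m.+2)) (delta (window c' (t0 + j%:Z) m.+2)) != 0) ->
  q_cycle m.+2 q delta (window_path c c' t0 k).
Proof.
move=> k_gt0 start stop nz; split; rewrite ?size_window_path //.
- by move=> j jk; apply/H_edge_window_path/nz.
- by rewrite nth_window_path // addr0.
- by rewrite nth_window_path.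
Qed.

Lemma window_path_diag c c' t0 k :
  map fst (window_path c c' t0 k) = map snd (window_path c c' t0 k) ->
  forall j, (j <= k)%N -> c (t0 + j%:Z) = c' (t0 + j%:Z).
Proof.
move=> diag j jk; have := congr1 (fun s => nth [::] s j) diag.
rewrite !(nth_map (nil, nil)) ?size_window_path // nth_window_path //= => eqw.
by have := congr1 (fun s => nth (c 0) s 0) eqw; rewrite !nth_window // addr0.
Qed.

End WindowsInH.

Definition cycle_conf (S : Type) (q : S) (p : seq (seq S * seq S)) (b : bool) (t : int) : S :=
  if (0 <= t) && (t < ((size p).-1)%:Z) then head q (side b (nth (nil, nil) p (absz t)))
  else q.

Lemma cycle_conf_config (S : finType) (q : S) p b : config q (cycle_conf q p b).
Proof.
apply: (sub_finite_set _ (finite_fset (segment_fset 0 (size p).-1))) => t /= ht.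
rewrite /= in_segment_fset /in_segment add0r; apply/negPn/negP => out.
by move: ht; rewrite /cycle_conf (negbTE out) eqxx.
Qed.

Section CycleConfiguration.
Variables (R : realType) (S : finType) (q : S) (delta : seq S -> S -> R[i]) (m : nat).
Variable p : seq (seq S * seq S).
Hypothesis p_cycle : q_cycle m.+2 q delta p.

Let k := (size p).-1.
Let qv := q_vertex m.+2 q.

Lemma q_cycle_edge j : (j < k)%N -> H_edge m.+2 delta (nth qv p j) (nth qv p j.+1).
Proof. by case: p_cycle => size_p edge _ _ jk; apply: edge; rewrite /k in jk; lia. Qed.

Lemma q_cycle_vertex_size b j : (j <= k)%N -> size (side b (nth qv p j)) = m.+1.
Proof.
rewrite leq_eqVlt => /orP[/eqP ->|jk]; last exact: H_edge_size (q_cycle_edge jk).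
by case: p_cycle => _ _ _ ->; case: b; rewrite /= size_nseq; lia.
Qed.

Lemma q_cycle_vertex_nth b l j : (j <= k)%N -> (l < m.+1)%N ->
  nth q (side b (nth qv p j)) l = cycle_conf q p b (j%:Z + l%:Z).
Proof.
case: p_cycle => _ _ _ p_stop.
have at_stop l' : nth q (side b (nth qv p k)) l' = q /\ cycle_conf q p b (k%:Z + l'%:Z) = q.
  split; last by rewrite /cycle_conf -/k ifF //; lia.
  by rewrite p_stop; case: b; rewrite [nth _ _ _]nth_nseq if_same.
elim: l j => [|l IH] j; rewrite leq_eqVlt => /orP[/eqP ->|jk] lm.
- by case: (at_stop 0%N) => -> ->.
- rewrite /cycle_conf -/k ifT; last by lia.
  by rewrite addr0 nth0 (set_nth_default qv) //; rewrite /k in jk; lia.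
- by case: (at_stop l.+1) => -> ->.
- rewrite (H_edge_shift _ _ (q_cycle_edge jk)); last by lia.
  by rewrite IH //; [congr cycle_conf; lia | lia].
Qed.

Lemma q_cycle_eq_window_path :
  p = window_path m (cycle_conf q p true) (cycle_conf q p false) 0 k.
Proof.
case: p_cycle => size_p _ _ _.
apply: (@eq_from_nth _ qv); first by rewrite size_window_path /k; lia.
move=> j jp; have jk : (j <= k)%N by rewrite /k; lia.
rewrite nth_window_path //.
suff win b : side b (nth qv p j) = window (cycle_conf q p b) (0 + j%:Z) m.+1.
  by rewrite -(win true) -(win false); case: (nth qv p j).
apply: (@eq_from_nth _ q); first by rewrite size_window q_cycle_vertex_size.
move=> l; rewrite q_cycle_vertex_size // => lm.
by rewrite nth_window // add0r q_cycle_vertex_nth.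
Qed.

Lemma cycle_conf_start b t : (0 <= t <= m%:Z) -> cycle_conf q p b t = q.
Proof.
case: p_cycle => _ _ p_start _ tm; have l_lt : (absz t < m.+1)%N by lia.
have := q_cycle_vertex_nth b (leq0n k) l_lt; rewrite p_start.
have -> : 0%:Z + (absz t)%:Z = t by lia.
by move <-; case: b; rewrite [nth _ _ _]nth_nseq l_lt.
Qed.

Lemma cycle_conf_quiescent b t :
  ~~ in_segment 0 k t -> window (cycle_conf q p b) t m.+2 = nseq m.+2 q.
Proof.
rewrite /in_segment add0r => out; apply: window_nseq => l lm.
have [in_start|out_start] := boolP (0 <= t + l%:Z <= m%:Z); first exact: cycle_conf_start.
by rewrite /cycle_conf -/k ifF //; lia.
Qed.

End CycleConfiguration.

Section Orthogonality.
Variables (R : realType) (S : finType) (q : S) (N : seq int) (delta : seq S -> S -> R[i]).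
Hypotheses (A_lqca : is_LQCA q N delta) (N_simple : is_simple N).
Variable m : nat.
Hypothesis size_N : size N = m.+2.

Lemma col_inner_windows c c' t0 n :
  (forall t, ~~ in_segment t0 n t -> window c t m.+2 = nseq m.+2 q) ->
  (forall t, ~~ in_segment t0 n t -> window c' t m.+2 = nseq m.+2 q) ->
  col_inner q N delta c c' =
  \prod_(j < n) dotv (delta (window c (t0 + j%:Z) m.+2)) (delta (window c' (t0 + j%:Z) m.+2)).
Proof.
have [N_nil N_sorted _ delta_q] := A_lqca.
have nbhdE d i : nbhd N d i = window d (i + head 0 N) m.+2.
  by rewrite nbhd_simple // size_N.
have quiet d : (forall t, ~~ in_segment t0 n t -> window d t m.+2 = nseq m.+2 q) ->
    quiescent_off_segment q N (t0 - head 0 N) n d.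
  by move=> dq i out; rewrite nbhdE size_N dq //; move: out; rewrite /in_segment; lia.
move=> /quiet cq /quiet c'q; rewrite (col_inner_prod delta_q cq c'q).
apply: eq_bigr => j _; rewrite !nbhdE.
by rewrite (_ : t0 - head 0 N + j%:Z + head 0 N = t0 + j%:Z) //; lia.
Qed.

Lemma q_cycle_diag_of_orthogonal : columns_orthogonal q N delta ->
  forall p, q_cycle m.+2 q delta p -> map fst p = map snd p.
Proof.
move=> orth p p_cycle; have [//|neq] := eqVneq (map fst p) (map snd p); exfalso.
have pE := q_cycle_eq_window_path p_cycle.
have conf_neq : cycle_conf q p true <> cycle_conf q p false.
  move=> conf_eq; move/eqP: neq; apply.
  by rewrite pE conf_eq -!map_comp; apply: eq_map.
have := orth _ _ (cycle_conf_config q p true) (cycle_conf_config q p false) conf_neq.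
rewrite (col_inner_windows (cycle_conf_quiescent p_cycle true)
                           (cycle_conf_quiescent p_cycle false)).
apply/eqP/prodf_neq0 => j _.
apply/(H_edge_window_path _ _ (q_vertex m.+2 q) _ _ _ (ltn_ord j)).
by rewrite -pE; apply: q_cycle_edge.
Qed.

Lemma orthogonal_of_q_cycle_diag :
  (forall p, q_cycle m.+2 q delta p -> map fst p = map snd p) ->
  columns_orthogonal q N delta.
Proof.
move=> diag c c' c_conf c'_conf neq.
have [//|nz] := eqVneq (col_inner q N delta c c') 0; exfalso.
have [[M cM] [M' c'M]] := (config_bounded c_conf, config_bounded c'_conf).
(* Both supports lie in [-B, B]; the witness cycle is the window sequence of
   (c, c') from t0 = -B - r + 1 to B + 1. *)
pose B := maxn M M'; pose t0 := - B%:Z - m.+1%:Z; pose n := (2 * B + m.+2)%N.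
have [cB c'B] : (forall t, (B < `|t|)%N -> c t = q) /\ (forall t, (B < `|t|)%N -> c' t = q).
  by split=> t Bt; [apply: cM | apply: c'M]; rewrite /B in Bt; lia.
have quiet d : (forall t, (B < `|t|)%N -> d t = q) ->
    forall t, ~~ in_segment t0 n t -> window d t m.+2 = nseq m.+2 q.
  move=> dB t out; apply: window_nseq => l lm; apply: dB.
  by move: out; rewrite /in_segment /t0 /n; lia.
have ends d s : (forall t, (B < `|t|)%N -> d t = q) -> (s = t0 \/ s = t0 + n%:Z) ->
    window d s m.+1 = nseq m.+1 q.
  move=> dB s_end; apply: window_nseq => l lm; apply: dB.
  by rewrite /t0 /n in s_end; lia.
rewrite (col_inner_windows (quiet c cB) (quiet c' c'B)) in nz.
have p_cycle : q_cycle m.+2 q delta (window_path m c c' t0 n).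
  apply: window_path_q_cycle.
  - by rewrite /n; lia.
  - by rewrite (ends c _ cB) ?(ends c' _ c'B) //; left.
  - by rewrite (ends c _ cB) ?(ends c' _ c'B) //; right.
  - by move=> j jn; move/prodf_neq0: nz => /(_ (Ordinal jn) isT).
apply: neq; apply/funext => t.
have [Bt|Bt] := leqP `|t| B; last by rewrite cB ?c'B.
have tE : t = t0 + (absz (t - t0))%:Z by rewrite /t0; lia.
by rewrite tE (window_path_diag (diag _ p_cycle)) //; rewrite /t0 /n; lia.
Qed.


End Orthogonality.

Theorem lemma5 (R : realType) (S : finType) (q : S) (N : seq int)
    (delta : seq S -> S -> R[i]) :
  is_LQCA q N delta -> is_simple N -> (2 <= size N)%N ->
  (columns_orthogonal q N delta <->
   forall p : seq (seq S * seq S), q_cycle (size N) q delta p ->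
     map fst p = map snd p).
Proof.
move=> A_lqca N_simple r_ge2.
have [m size_N] : exists m, size N = m.+2 by exists (size N - 2)%N; lia.
rewrite size_N; split.
- exact: q_cycle_diag_of_orthogonal.
- exact: orthogonal_of_q_cycle_diag.
Qed.
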